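(* At the end of any iteration of the main loop of MAPTree, for every OR node $u\in\mathcal G'$ such that some partial solution rooted at $u$ in $\mathcal G'$ exists, $\mathrm{getSolution}(u)$ returns a minimum-cost partial solution rooted at $u$ in $\mathcal G'$.
   Context: Let $x_1,\dots,x_N\in\{0,1\}^F$ be a binary dataset $\mathcal X$ with labels $\mathcal Y\in\{0,1\}^N$, $[N]=\{1,\dots,N\}$. For $\mathcal I\subseteq[N]$, $f\in[F]$, $k\in\{0,1\}$ let $\mathcal I|_{f=k}=\{i\in\mathcal I:(x_i)_f=k\}$, $c^k(\mathcal I)=|\{i\in\mathcal I:y_i=k\}|$, $\mathcal V(\mathcal I)=\{f:\mathcal I|_{f=0}\neq\emptyset\text{ and }\mathcal I|_{f=1}\neq\emptyset\}$. Fix $\rho^1,\rho^0>0$, $\alpha\in(0,1)$, $\beta\ge0$; $\ell_{\rm leaf}(c^1,c^0)=B(c^1+\rho^1,c^0+\rho^0)/B(\rho^1,\rho^0)$ ($B$ the Beta function), $p_{\rm split}(d)=\alpha(1+d)^{-\beta}$, $p_{\rm leaf}(d,\mathcal I)=1$ if $\mathcal V(\mathcal I)=\emptyset$ else $1-p_{\rm split}(d)$, $p_{\rm inner}(d,\mathcal I)=0$ if $\mathcal V(\mathcal I)=\emptyset$ else $p_{\rm split}(d)/|\mathcal V(\mathcal I)|$; $-\log0=+\infty$, and a minimum over an empty set is $+\infty$. Graph $\mathcal G=\mathcal G_{\mathcal X,\mathcal Y}$: for nonempty $\mathcal I\subseteq[N]$, $d\in\{0,\dots,F\}$, an OR node $o_{\mathcal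 I,d}$ with terminal child $t_{\mathcal I,d}$ (edge cost $-\log p_{\rm leaf}(d,\mathcal I)-\log\ell_{\rm leaf}(c^1(\mathcal I),c^0(\mathcal I))$); for $d<F$, $f\in\mathcal V(\mathcal I)$, an AND child $a_{\mathcal I,d,f}$ (edge cost $-\log p_{\rm inner}(d,\mathcal I)$) with cost-$0$ edges to $o_{\mathcal I|_{f=0},d+1}$, $o_{\mathcal I|_{f=1},d+1}$; root $r=o_{[N],0}$; only nodes reachable from $r$ kept. A partial solution rooted at an OR node $u$ in $\mathcal G'$ is a set $\mathcal S\subseteq\mathcal G'$ containing $u$, all of whose nodes are reachable from $u$ inside $\mathcal S$, such that every AND node of $\mathcal S$ has both children in $\mathcal S$ and every OR node of $\mathcal S$ has exactly one child in $\mathcal S$; its cost is the sum of the costs of edges $v\to w$ with $v,w\in\mathcal S$. Heuristic: $h(o_{\mathcal I,d})=-\max\{\log\ell_{\rm leaf}(c^1(\mathcal I),c^0(\mathcal I)),\log p_{\rm split}(d)+\log\ell_{\rm leaf}(c^1(\mathcal I),0)+\log\ell_{\rm leaf}(0,c^0(\mathcal I))\}$. MAPTree maintains a node set $\mathcal G'$, a set $\mathcal E$ of expanded OR nodes, and values $LB[u],UB[u]\in\mathbb R\cup\{+\infty\}$ for OR nodes ($UB[u]=+\infty$ until set); for an AND node $a$ with children $o_0,o_1$, $LB[a]=LB[o_0]+LB[o_1]$ and $UB[a]=UB[o_0]+UB[o_1]$. Initialize $\mathcal G'=\{r\}$, $\mathcal E=\emptyset$, $LB[r]=h(r)$, $UB[r]=+\infty$.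 While $LB[r]<UB[r]$ (and optionally while time remains): (1) $o:=r$; while $o\in\mathcal E$, choose an AND child $a^*$ of $o$ minimizing $\mathrm{cost}(o,a)+LB[a]$, with children $o_0$ (value-0 side) and $o_1$, and set $o:=o_0$ if $UB[o_0]-LB[o_0]>UB[o_1]-LB[o_1]$, else $o:=o_1$. (2) Add $o$ to $\mathcal E$ and its terminal child to $\mathcal G'$; for each AND child $a$ of $o$ with children $o_0,o_1$, add $a,o_0,o_1$ to $\mathcal G'$ and set $LB[o_0]:=h(o_0)$, $LB[o_1]:=h(o_1)$. (3) Starting from $Q=\{o\}$, repeatedly remove from $Q$ an OR node $u$ of maximal depth, compute $v=\min\{\min_a(\mathrm{cost}(u,a)+LB[a]),\mathrm{cost}(u,t_u)\}$ over the AND children $a$ and terminal child $t_u$ of $u$; if $v>LB[u]$, set $LB[u]:=v$ and add to $Q$ every OR node of $\mathcal G'$ that is the parent of an AND node of $\mathcal G'$ having $u$ as child. (4) The same with $UB$ in place of $LB$, updating when $v<UB[u]$. $\mathrm{getSolution}(u)$, for an OR node $u$ with terminal child $t$: if $u$ has no AND child or $\mathrm{cost}(u,t)\le\min_a(\mathrm{cost}(u,a)+UB[a])$, return $\{u,t\}$; else, with $a^*$ an AND child attaining the minimum and children $u_0,u_1$, return $\{u,a^*\}\cup\mathrm{getSolution}(u_0)\cup\mathrm{getSolution}(u_1)$. *)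

From HB Require Import structures.
From mathcomp Require Import all_boot all_order all_algebra.
From mathcomp Require Import all_classical all_reals all_analysis.

Set Implicit Arguments.
Unset Strict Implicit.
Unset Printing Implicit Defensive.

Import Order.TTheory GRing.Theory Num.Theory.

(* Nodes of the AND/OR graph G_{X,Y}.                                  *)
(*   Or A d        = o_{A,d}                                           *)
(*   And A d f     = a_{A,d,f}                                         *)
(*   Term A d      = t_{A,d}                                           *)
(* with A a subset of [N] (= 'I_N) and d in {0,...,F} (= 'I_F.+1).    *)
Inductive node (N F : nat) :=
| Or of {set 'I_N} & 'I_F.+1
| And of {set 'I_N} & 'I_F.+1 & 'I_F
| Term of {set 'I_N} & 'I_F.+1.

Section NodeFin.
Variables N F : nat.
Local Notation S := ({set 'I_N} * 'I_F.+1)%type.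
Definition node_enc (v : node N F) : (S + (S * 'I_F)) + S :=
  match v with
  | Or A d => inl (inl (A, d))
  | And A d f => inl (inr ((A, d), f))
  | Term A d => inr (A, d)
  end.
Definition node_dec (x : (S + (S * 'I_F)) + S) : node N F :=
  match x with
  | inl (inl (A, d)) => Or A d
  | inl (inr ((A, d), f)) => And A d f
  | inr (A, d) => Term A d
  end.
Lemma node_encK : cancel node_enc node_dec. Proof. by case. Qed.
HB.instance Definition _ := Finite.copy (node N F) (can_type node_encK).
End NodeFin.

Section MAPTree.
Context (R : realType) (N F : nat)
        (X : 'I_N -> 'I_F -> bool)
        (Y : 'I_N -> bool)          (* y_i = 1 iff Y i *)
        (rho1 rho0 alpha beta : R).

Local Open Scope ring_scope.

Local Notation node := (node N F).

Definition restr (A : {set 'I_N}) (f : 'I_F) (k : bool) : {set 'I_N} :=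
  [set i in A | X i f == k].

Definition cnt1 (A : {set 'I_N}) : nat := #|[set i in A | Y i]|.
Definition cnt0 (A : {set 'I_N}) : nat := #|[set i in A | ~~ Y i]|.

Definition splits (A : {set 'I_N}) : {set 'I_F} :=
  [set f | (restr A f false != finset.set0) && (restr A f true != finset.set0)].

Definition Beta (a b : R) : R :=
  fine (\int[@lebesgue_measure R]_(t in `]0%R, 1%R[)
          ((t `^ (a - 1)) * ((1 - t) `^ (b - 1)))%:E)%E.

Definition ell_leaf (c1 c0 : nat) : R :=
  Beta (c1%:R + rho1) (c0%:R + rho0) / Beta rho1 rho0.

Definition p_split (d : nat) : R := alpha * (1 + d%:R) `^ (- beta).

Definition p_leaf (d : nat) (A : {set 'I_N}) : R :=
  if splits A == finset.set0 then 1 else 1 - p_split d.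

Definition p_inner (d : nat) (A : {set 'I_N}) : R :=
  if splits A == finset.set0 then 0 else p_split d / #|splits A|%:R.

Definition neglog (p : R) : \bar R :=
  if p == 0 then +oo%E else (- ln p)%:E.

Definition heur (A : {set 'I_N}) (d : nat) : \bar R :=
  (- Num.max (ln (ell_leaf (cnt1 A) (cnt0 A)))
             (ln (p_split d) + ln (ell_leaf (cnt1 A) 0)
                             + ln (ell_leaf 0 (cnt0 A))))%:E.

Definition is_or (v : node) : bool := if v is Or _ _ then true else false.
Definition is_and (v : node) : bool := if v is And _ _ _ then true else false.

Definition depth (v : node) : nat :=
  match v with Or _ d | And _ d _ | Term _ d => d end.

Definition child (k : bool) (a : node) : node :=
  match a with
  | And A d f => Or (restr A f k) (inord d.+1)
  | _ => a
  end.
Definition child0 := child false.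
Definition child1 := child true.

Definition term (u : node) : node :=
  if u is Or A d then Term A d else u.

Definition edge (v w : node) : bool :=
  match v, w with
  | Or A d, Term A' d' => [&& A' == A, d' == d & A != finset.set0]
  | Or A d, And A' d' f =>
      [&& A' == A, d' == d, A != finset.set0, (d < F)%N & f \in splits A]
  | And A d f, Or A' d' =>
      [&& A != finset.set0, (d < F)%N, f \in splits A,
          (A' == restr A f false) || (A' == restr A f true)
        & (d' == d.+1 :> nat)]
  | _, _ => false
  end.

Definition cost (v w : node) : \bar R :=
  match v, w with
  | Or A d, Term _ _ =>
      (neglog (p_leaf d A) + neglog (ell_leaf (cnt1 A) (cnt0 A)))%E
  | Or A d, And _ _ _ => neglog (p_inner d A)
  | _, _ => 0%E
  end.

Definition root : node := Or [set: 'I_N] ord0.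

Definition hnode (v : node) : \bar R :=
  if v is Or A d then heur A d else 0%E.

Record state := State {
  Gp : {set node};
  Ex : {set node};
  LB : node -> \bar R;         (* meaningful on OR nodes *)
  UB : node -> \bar R }.

Local Open Scope ereal_scope.

Definition aval (W : node -> \bar R) (v : node) : \bar R :=
  if is_and v then W (child0 v) + W (child1 v) else W v.

Definition min_and (Gs : {set node}) (W : node -> \bar R) (u : node)
  : \bar R :=
  \big[Order.min/+oo]_(a in Gs | is_and a && edge u a) (cost u a + aval W a).

Definition orval (Gs : {set node}) (W : node -> \bar R) (u : node)
  : \bar R :=
  Order.min (min_and Gs W u) (cost u (term u)).

Definition parents (Gs : {set node}) (u : node) : {set node} :=
  [set p in Gs | is_or p &&
     [exists a in Gs, [&& is_and a, edge p a & edge a u]]].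

Definition upd (W : node -> \bar R) (u : node) (x : \bar R) : node -> \bar R :=
  fun v => if v == u then x else W v.

(* Steps (3)/(4): propagation from a queue Q.  [better v old] is
   [old < v] for LB and [v < old] for UB.  Choices of the removed node
   among the nodes of maximal depth are arbitrary (nondeterminism). *)
Inductive propagate (better : \bar R -> \bar R -> bool) (Gs : {set node})
  : {set node} -> (node -> \bar R) -> (node -> \bar R) -> Prop :=
| prop_done W : propagate better Gs finset.set0 W W
| prop_step (Q : {set node}) (W W' : node -> \bar R) u :
    u \in Q ->
    (forall u', u' \in Q -> (depth u' <= depth u)%N) ->
    propagate better Gs
      (if better (orval Gs W u) (W u) then (Q :\ u) :|: parents Gs u
       else Q :\ u)
      (if better (orval Gs W u) (W u) then upd W u (orval Gs W u) else W)
      W' ->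
    propagate better Gs Q W W'.

Definition next (st : state) (a : node) : node :=
  if UB st (child1 a) - LB st (child1 a) < UB st (child0 a) - LB st (child0 a)
  then child0 a else child1 a.

Inductive descend (st : state) : node -> node -> Prop :=
| desc_stop o : o \notin Ex st -> descend st o o
| desc_step o a o' :
    o \in Ex st -> a \in Gp st -> is_and a -> edge o a ->
    (forall a', a' \in Gp st -> is_and a' -> edge o a' ->
       cost o a + aval (LB st) a <= cost o a' + aval (LB st) a') ->
    descend st (next st a) o' ->
    descend st o o'.

Definition is_and_child (o a : node) : bool := is_and a && edge o a.
Definition is_grandchild (o w : node) : bool :=
  [exists a, is_and_child o a && edge a w].

Definition expand_Gp (st : state) (o : node) : {set node} :=
  Gp st :|: [set term o] :|: [set a | is_and_child o a]
        :|: [set w | is_grandchild o w].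

Definition expand_LB (st : state) (o : node) : node -> \bar R :=
  fun v => if is_grandchild o v then hnode v else LB st v.

Definition iteration (st st' : state) : Prop :=
  LB st root < UB st root /\
  exists o LB' UB',
    [/\ descend st root o,
        propagate (fun v old => old < v) (expand_Gp st o) [set o]
                  (expand_LB st o) LB',
        propagate (fun v old => v < old) (expand_Gp st o) [set o]
                  (UB st) UB'
      & st' = State (expand_Gp st o) (o |: Ex st) LB' UB'].

Definition init_state : state :=
  State [set root] finset.set0 (fun v => hnode v) (fun _ => +oo).

Inductive reachable : state -> Prop :=
| reach_init : reachable init_state
| reach_step st st' : reachable st -> iteration st st' -> reachable st'.

Definition edge_in (S : {set node}) : rel node :=
  fun v w => [&& v \in S, w \in S & edge v w].

Definition partial_solution (Gs : {set node}) (u : node) (S : {set node})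
  : Prop :=
  [/\ S \subset Gs, u \in S,
      (forall v, v \in S -> connect (edge_in S) u v),
      (forall a w, a \in S -> is_and a -> w \in Gs -> edge a w -> w \in S)
    & (forall o, o \in S -> is_or o -> #|[set w in S | edge o w]| = 1%N)].

Definition sol_cost (S : {set node}) : \bar R :=
  \sum_(v in S) \sum_(w in S | edge v w) cost v w.

(* getSolution(u), choice of the minimizing AND child arbitrary *)
Inductive getSolution (st : state) : node -> {set node} -> Prop :=
| gs_leaf u :
    is_or u ->
    cost u (term u) <= min_and (Gp st) (UB st) u ->
    getSolution st u [set u; term u]
| gs_node u a S0 S1 :
    is_or u -> a \in Gp st -> is_and a -> edge u a ->
    cost u a + aval (UB st) a = min_and (Gp st) (UB st) u ->
    ~ (cost u (term u) <= min_and (Gp st) (UB st) u) ->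
    getSolution st (child0 a) S0 ->
    getSolution st (child1 a) S1 ->
    getSolution st u (u |: (a |: (S0 :|: S1))).

End MAPTree.

From Pilot Require Import Defs.
From HB Require Import structures.
From mathcomp Require Import all_boot all_order all_algebra.
From mathcomp Require Import all_classical all_reals all_analysis.
Import Order.TTheory GRing.Theory Num.Theory.

(* Throughout the search, UB is +oo at every OR node of G' that
   has not been expanded, and satisfies the Bellman equation
     UB[u] = min (cost(u,t_u), min_a cost(u,a) + UB[a0] + UB[a1])
   over G' at every expanded one.  Expanding o adds o to E with UB[o] = +oo, which
   can only exceed its Bellman value; step (4) lowers one value at a time and
   requeues the parents of every node whose value drops, so all equations hold
   again once the queue is empty.
   Given the equations, getSolution(u) follows minimizing choices and builds a
   partial solution of cost UB[u].  Conversely, by induction on F - depth u,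
   every partial solution rooted at u costs at least UB[u]: it consists of u,
   its chosen child, and (for an AND child) the parts reachable from the two
   grandchildren, which are disjoint because the sample sets of the two
   children of an AND node are.  Finally, a node admitting a partial solution
   has a child in G', hence has been expanded. *)

Set Implicit Arguments.
Unset Strict Implicit.
Unset Printing Implicit Defensive.

Section MAPTreeCorrectness.
Variables (R : realType) (N F : nat) (X : 'I_N -> 'I_F -> bool) (Y : 'I_N -> bool)
  (rho1 rho0 alpha beta : R).
Local Notation node := (node N F).
Local Notation state := (state R N F).
Local Notation edge := (edge X).
Local Notation edge_in := (edge_in X).
Local Notation child := (child X).
Local Notation parents := (parents X).
Local Notation partial_solution := (partial_solution X).
Local Notation cost := (cost X Y rho1 rho0 alpha beta).
Local Notation sol_cost := (sol_cost X Y rho1 rho0 alpha beta).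
Local Notation aval := (aval X).
Local Notation min_and := (min_and X Y rho1 rho0 alpha beta).
Local Notation orval := (orval X Y rho1 rho0 alpha beta).
Local Notation propagate := (propagate X Y rho1 rho0 alpha beta).
Local Notation getSolution := (getSolution X Y rho1 rho0 alpha beta).

Definition samples (v : node) : {set 'I_N} :=
  match v with Or A _ | And A _ _ | Term A _ => A end.

Lemma edge_samples_neq0 v w : edge v w -> samples w != finset.set0.
Proof.
case: v => [A d|A d f|A d]; case: w => [A' d'|A' d' f'|A' d'] //=.
- by case/and5P=> /eqP->.
- by case/and3P=> /eqP->.
- by case/and5P=> _ _; rewrite inE => /andP[? ?] /orP[] /eqP->.
Qed.

Lemma edge_samples_sub v w : edge v w -> samples w \subset samples v.
Proof.
case: v => [A d|A d f|A d]; case: w => [A' d'|A' d' f'|A' d'] //=.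
- by case/and5P=> /eqP->.
- by case/and3P=> /eqP->.
- case/and5P=> _ _ _ /orP[] /eqP-> _;
  by apply/fintype.subsetP=> i; rewrite inE => /andP[].
Qed.

Lemma edge_depth v w : edge v w -> depth w = (depth v + is_and v)%N.
Proof.
case: v => [A d|A d f|A d]; case: w => [A' d'|A' d' f'|A' d'] //=.
- by case/and5P=> _ /eqP->; rewrite addn0.
- by case/and3P=> _ /eqP->; rewrite addn0.
- by case/and5P=> _ _ _ _ /eqP->; rewrite addn1.
Qed.

Lemma depth_or_edge u w : is_or u -> edge u w -> depth w = depth u.
Proof. by move=> uor /edge_depth->; case: u uor => //= *; rewrite addn0. Qed.

Lemma edge_irr (v : node) : edge v v = false.
Proof. by case: v. Qed.

Lemma or_not_and (u : node) : is_or u -> ~~ is_and u.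
Proof. by case: u. Qed.

Lemma neq_term (u : node) : is_or u -> u != term u.
Proof. by case: u. Qed.

Lemma term_not_and (u : node) : is_or u -> ~~ is_and (term u).
Proof. by case: u. Qed.

Lemma edge_term (u : node) : is_or u -> samples u != finset.set0 -> edge u (term u).
Proof. by case: u => //= A d _ ->; rewrite !eqxx. Qed.

Lemma edge_from_term (u w : node) : is_or u -> edge (term u) w = false.
Proof. by case: u => //= A d _; case: w. Qed.

Lemma edge_orP u w : is_or u -> edge u w -> w = term u \/ is_and w.
Proof.
case: u => //= A d _; case: w => [A' d'|A' d' f'|A' d'] //=; first by right.
by case/and3P=> /eqP-> /eqP->; left.
Qed.

Lemma edge_andP a w : is_and a -> edge a w -> w = child false a \/ w = child true a.
Proof.
case: a => //= A d f _; case: w => [A' d'|A' d' f'|A' d'] //=.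
case/and5P=> _ dF _ /orP hA /eqP hd.
have -> : d' = inord d.+1 by apply: val_inj; rewrite /= inordK // ltnS.
by case: hA => /eqP->; [left|right].
Qed.

Lemma edge_child v a k : is_and a -> edge v a -> edge a (child k a).
Proof.
case: a => //= A d f _; case: v => [A' d'|A' d' f'|A' d'] //=.
case/and5P=> /eqP-> /eqP-> A0 dF fA; rewrite A0 dF fA inordK ?ltnS // eqxx andbT.
by case: k; rewrite eqxx ?orbT.
Qed.

Lemma is_or_child k (a : node) : is_and a -> is_or (child k a).
Proof. by case: a. Qed.

Lemma depth_child v a k : edge v a -> is_and a -> depth (child k a) = (depth a).+1.
Proof. by move=> e aand; rewrite (edge_depth (edge_child k aand e)) aand addn1. Qed.

Lemma child_neq_parent u a k : is_or u -> edge u a -> is_and a -> child k a != u.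
Proof.
move=> uor e aand; apply/eqP=> cu.
by move: (depth_child k e aand); rewrite cu (depth_or_edge uor e) => /n_Sn.
Qed.

Lemma depth_ltF u a : is_or u -> edge u a -> is_and a -> (depth u < F)%N.
Proof.
case: u => //= A d _; case: a => [A' d'|A' d' f'|A' d'] //=.
by case/and5P.
Qed.

Lemma height_child_lt u a k : is_or u -> edge u a -> is_and a ->
  (F - depth (child k a) < F - depth u)%N.
Proof.
move=> uor e aand; have := depth_ltF uor e aand.
by rewrite (depth_child k e aand) (depth_or_edge uor e) => ltF; rewrite subnS prednK ?subn_gt0.
Qed.

Lemma disjoint_children v a : edge v a -> is_and a ->
  [disjoint samples (child false a) & samples (child true a)].
Proof.
case: a => //= A d f; case: v => [A' d'|A' d' f'|A' d'] // _ _.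
rewrite -setI_eq0; apply/eqP/setP=> i; rewrite !inE.
by case: (X i f); rewrite !andbF.
Qed.

Lemma or_parent_unique v v' w : is_or v -> is_or v' -> edge v w -> edge v' w -> v = v'.
Proof.
case: v => //= A d _; case: v' => //= A' d' _; case: w => [B e|B e g|B e] //=.
- by case/and5P=> /eqP-> /eqP-> _ _ _ /and5P[/eqP-> /eqP->].
- by case/and3P=> /eqP-> /eqP-> _ /and3P[/eqP-> /eqP->].
Qed.

Lemma grandchild_or o w : is_grandchild X o w -> is_or w.
Proof.
case/existsP=> a /andP[/andP[aand _] e].
by case: (edge_andP aand e) => ->; apply: is_or_child.
Qed.

Lemma connect_samples_depth (S : {set node}) x v : connect (edge_in S) x v ->
  [/\ samples v \subset samples x, (depth x <= depth v)%N
    & samples x != finset.set0 -> samples v != finset.set0].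
Proof.
case/connectP=> p; elim: p x => [|y p IH] x /=; first by move=> _ ->.
case/andP=> /and3P[_ _ exy] /IH/[apply] -[sub le ne].
split.
- exact: fintype.subset_trans sub (edge_samples_sub exy).
- by rewrite (leq_trans _ le) // (edge_depth exy) leq_addr.
- by move=> _; apply/ne/(edge_samples_neq0 exy).
Qed.

Lemma connect_edge_in_sub (S T : {set node}) x y : S \subset T ->
  connect (edge_in S) x y -> connect (edge_in T) x y.
Proof.
move=> /fintype.subsetP sST; apply: connect_sub => v w /and3P[vS wS e].
by apply: connect1; rewrite /edge_in /= sST // sST.
Qed.

Definition reachset (S : {set node}) x := [set v in S | connect (edge_in S) x v].

Lemma connect_reachset (S : {set node}) x z y : z \in reachset S x ->
  connect (edge_in S) z y -> connect (edge_in (reachset S x)) z y.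
Proof.
move=> zT /connectP[p]; elim: p z zT => [|w p IH] z zT /=; first by move=> _ ->.
case/andP=> ezw pth yE; have /and3P[_ wS e] := ezw.
have wT : w \in reachset S x.
  by case/setIdP: zT => _ cz; rewrite inE wS (connect_trans cz (connect1 ezw)).
apply: connect_trans (IH w wT pth yE).
by apply: connect1; rewrite /edge_in /= zT wT.
Qed.

Section PartialSolutions.
Variable G : {set node}.

Lemma connect_edge_inP (S : {set node}) x v : connect (edge_in S) x v ->
  v = x \/ exists2 y, edge_in S x y & connect (edge_in S) y v.
Proof.
case/connectP=> -[|y p] /=; first by move=> _ ->; left.
by case/andP=> exy pth ->; right; exists y => //; apply/connectP; exists p.
Qed.

Lemma partial_solution_connect u S v :
  partial_solution G u S -> v \in S -> connect (edge_in S) u v.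
Proof. by case=> _ _ conn _ _; apply: conn. Qed.

Lemma partial_solution_sub u S : partial_solution G u S -> S \subset G.
Proof. by case. Qed.

Lemma partial_solution_and_child u S a w : partial_solution G u S ->
  a \in S -> is_and a -> w \in G -> edge a w -> w \in S.
Proof. by case=> _ _ _ closed _; apply: closed. Qed.

Lemma partial_solution_reachset u S x :
  partial_solution G u S -> x \in S -> partial_solution G x (reachset S x).
Proof.
case=> sub _ _ closed one xS.
have xT : x \in reachset S x by rewrite inE xS connect0.
have edge_reach o w : o \in reachset S x -> w \in S -> edge o w -> w \in reachset S x.
  case/setIdP=> oS co wS e; rewrite inE wS (connect_trans co) //.
  by apply: connect1; rewrite /edge_in /= oS wS.
split=> //.
- by apply: fintype.subset_trans sub; apply/fintype.subsetP=> v /setIdP[].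
- by move=> v /[dup] vT /setIdP[_ cv]; apply: connect_reachset xT cv.
- move=> a w aT aand wG e; have /setIdP[aS _] := aT.
  exact: edge_reach aT (closed a w aS aand wG e) e.
- move=> o /[dup] oT /setIdP[oS _] oor; rewrite -(one o oS oor).
  apply: eq_card => w; rewrite !inE -andbA; case: (boolP (w \in S)) => //= wS.
  apply/andP/idP => [[_ ->] //|e]; split=> //.
  by case/setIdP: (edge_reach o w oT wS e).
Qed.

Lemma partial_solution_choice u S : partial_solution G u S -> is_or u ->
  exists w, [/\ w \in S, edge u w & [set w' in S | edge u w'] = [set w]].
Proof.
case=> _ uS _ _ one uor.
have /cards1P[w Sw] : #|[set w' in S | edge u w']| == 1%N by rewrite one.
have : w \in [set w' in S | edge u w'] by rewrite Sw set11.
by rewrite inE => /andP[wS e]; exists w.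
Qed.

Lemma partial_solution_via_choice u S w v : partial_solution G u S ->
  [set w' in S | edge u w'] = [set w] -> v \in S ->
  v = u \/ connect (edge_in S) w v.
Proof.
move=> ps Sw /(partial_solution_connect ps)/connect_edge_inP[->|[y /and3P[_ yS e] cyv]].
  by left.
have : y \in [set w' in S | edge u w'] by rewrite inE yS.
by rewrite Sw inE => /eqP <-; right.
Qed.

Lemma partial_solution_leafE u S : partial_solution G u S -> is_or u ->
  [set w in S | edge u w] = [set term u] -> S = [set u; term u].
Proof.
move=> ps uor St; have : term u \in [set w in S | edge u w] by rewrite St set11.
case/setIdP=> tS _; have [_ uS _ _ _] := ps.
apply/setP=> v; rewrite !inE; apply/idP/idP => [vS|/orP[]/eqP-> //].
case: (partial_solution_via_choice ps St vS) => [->|]; first by rewrite eqxx.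
case/connect_edge_inP=> [->|[y /and3P[_ _]]]; first by rewrite eqxx orbT.
by rewrite edge_from_term.
Qed.

Lemma partial_solution_splitE u a S : partial_solution G u S -> is_or u -> is_and a ->
  [set w in S | edge u w] = [set a] ->
  S = u |: (a |: (reachset S (child false a) :|: reachset S (child true a))).
Proof.
move=> ps uor aand Sa; have : a \in [set w in S | edge u w] by rewrite Sa set11.
case/setIdP=> aS _; have [_ uS _ _ _] := ps.
apply/setP=> v; rewrite !inE; apply/idP/idP => [vS|]; last first.
  by case/or4P=> [/eqP->|/eqP->|/andP[]|/andP[]].
case: (partial_solution_via_choice ps Sa vS) => [->|]; first by rewrite eqxx.
case/connect_edge_inP=> [->|[y /and3P[_ yS e] cyv]]; first by rewrite eqxx orbT.
by case: (edge_andP aand e) => <-; rewrite vS cyv !orbT.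
Qed.

Lemma partial_solution_leaf u : is_or u -> u \in G -> term u \in G ->
  samples u != finset.set0 -> partial_solution G u [set u; term u].
Proof.
move=> uor uG tG u0; have eut := edge_term uor u0.
split.
- by apply/fintype.subsetP=> v; rewrite !inE => /orP[] /eqP->.
- by rewrite !inE eqxx.
- move=> v; rewrite !inE => /orP[] /eqP->; first exact: connect0.
  by apply: connect1; rewrite /edge_in /= !inE !eqxx orbT eut.
- by move=> a w; rewrite !inE => /orP[] /eqP->; rewrite ?(negbTE (or_not_and uor))
    ?(negbTE (term_not_and uor)).
- move=> o; rewrite !inE => /orP[] /eqP-> oor; last by move: oor; case: (u) uor.
  apply/eqP/cards1P; exists (term u); apply/setP=> w; rewrite !inE.
  case: (eqVneq w u) => [->|_]; first by rewrite edge_irr andbF (negbTE (neq_term uor)).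
  by case: (eqVneq w (term u)) => [->|].
Qed.

End PartialSolutions.

Local Open Scope ereal_scope.

Lemma gtNy_adde (x y : \bar R) : -oo < x -> -oo < y -> -oo < x + y.
Proof. by rewrite !ltNye adde_eq_ninfty negb_or => -> ->. Qed.

Lemma cost_gtNy (v w : node) : -oo < cost v w.
Proof.
have neglog_gtNy (p : R) : -oo < neglog p by rewrite /neglog; case: ifP => _; rewrite ?ltNyr.
case: v => [A d|A d f|A d]; case: w => * /=; rewrite ?ltNy0 //.
by apply: gtNy_adde.
Qed.

Lemma cost_and (a w : node) : is_and a -> cost a w = 0.
Proof. by case: a. Qed.

Lemma sol_cost_leaf (u : node) : is_or u -> samples u != finset.set0 ->
  sol_cost [set u; term u] = cost u (term u).
Proof.
move=> uor u0; rewrite /sol_cost big_setU1 /= ?inE ?neq_term // big_set1.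
rewrite [X in (_ + X)%R]big_pred0 => [|w]; last by rewrite edge_from_term ?andbF.
rewrite addr0 (big_pred1 (term u)) // => w /=.
rewrite !inE; case: (eqVneq w u) => [->|_].
  by rewrite edge_irr andbF (negbTE (neq_term uor)).
by case: (eqVneq w (term u)) => [->|] //=; rewrite edge_term.
Qed.

Section Split.
Variables (G : {set node}) (u a : node) (S0 S1 : {set node}).
Hypotheses (uor : is_or u) (aand : is_and a) (eua : edge u a)
  (ps0 : partial_solution G (child false a) S0)
  (ps1 : partial_solution G (child true a) S1).

Local Notation part k := (if k then S1 else S0).
Local Notation S := (u |: (a |: (S0 :|: S1))).

Lemma split_part_connect k v : v \in part k -> connect (edge_in (part k)) (child k a) v.
Proof.
by case: k; [exact: partial_solution_connect ps1 | exact: partial_solution_connect ps0].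
Qed.

Lemma split_part_mem k v : v \in part k ->
  [/\ samples v \subset samples (child k a), (depth u < depth v)%N
    & samples v != finset.set0].
Proof.
move=> /split_part_connect/connect_samples_depth[sub le ne]; split=> //.
  by rewrite (leq_trans _ le) // (depth_child k eua aand) (depth_or_edge uor eua).
exact/ne/(edge_samples_neq0 (edge_child k aand eua)).
Qed.

Lemma split_part_depth k w : (depth w <= depth u)%N -> (w \in part k) = false.
Proof. by move=> le; apply/negbTE/negP=> /split_part_mem[_]; rewrite ltnNge le. Qed.

Lemma split_part_exclusive k v : samples v != finset.set0 ->
  samples v \subset samples (child k a) -> (v \in part (~~ k)) = false.
Proof.
move=> ne sub; apply/negbTE/negP=> /split_part_mem[sub' _ _].
have := disjoint_children eua aand; rewrite -setI_eq0 => /eqP dis.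
move: ne; rewrite -finset.subset0 -dis finset.subsetI.
by case: k sub sub' => /= -> ->.
Qed.

Lemma split_parts_disjoint : [disjoint S0 & S1].
Proof.
apply/pred0P=> v /=; apply/negbTE/negP=> /andP[v0 v1].
have [sub _ ne] := split_part_mem (k:=false) v0.
by rewrite (split_part_exclusive ne sub) in v1.
Qed.

Lemma split_part_edge k v w : v \in part k ->
  ((w \in S) && edge v w) = ((w \in part k) && edge v w).
Proof.
move=> vS; case e: (edge v w); rewrite ?andbF // !andbT.
have [sub dv _] := split_part_mem vS.
have dw : (depth u < depth w)%N by rewrite (edge_depth e) (leq_trans dv) ?leq_addr.
have wu : w != u by apply: contraTneq dw => ->; rewrite ltnn.
have wa : w != a by apply: contraTneq dw => ->; rewrite (depth_or_edge uor eua) ltnn.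
have := split_part_exclusive (edge_samples_neq0 e)
  (fintype.subset_trans (edge_samples_sub e) sub).
by rewrite !inE (negbTE wu) (negbTE wa); case: k vS sub => _ _ /= ->; rewrite ?orbF.
Qed.

Lemma split_root_edge w : ((w \in S) && edge u w) = (w == a).
Proof.
case: (eqVneq w a) => [->|wa]; first by rewrite eua !inE eqxx orbT.
case e: (edge u w); rewrite ?andbF // andbT.
have dw : (depth w <= depth u)%N by rewrite (depth_or_edge uor e).
rewrite !inE (negbTE wa) (split_part_depth false dw) (split_part_depth true dw) !orbF.
by apply: contraTF e => /eqP->; rewrite edge_irr.
Qed.

Lemma split_root_notin : u \notin a |: (S0 :|: S1) /\ a \notin S0 :|: S1.
Proof.
have da : (depth a <= depth u)%N by rewrite (depth_or_edge uor eua).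
rewrite !inE !(split_part_depth false) ?(split_part_depth true) //= !orbF.
by split=> //; apply: contraTneq eua => ->; rewrite edge_irr.
Qed.

Lemma sol_cost_split : sol_cost S = cost u a + (sol_cost S0 + sol_cost S1).
Proof.
rewrite /sol_cost; have [nu na] := split_root_notin.
rewrite big_setU1 //= big_setU1 //= (eq_bigl _ _ split_root_edge) big_pred1_eq.
rewrite big1 ?add0r => [|w _]; last exact: cost_and.
(* [bigU] splits with the N-module addition, which is [adde] on [\bar R]. *)
congr (_ + _); rewrite -[RHS]/(_ + _)%R (eq_bigl [predU S0 & S1]) => [|v]; last first.
  by rewrite !inE.
rewrite bigU ?split_parts_disjoint //; congr (_ + _)%R.
  by apply: eq_bigr => v vS; apply: eq_bigl => w; apply: (split_part_edge (k:=false) w vS).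
by apply: eq_bigr => v vS; apply: eq_bigl => w; apply: (split_part_edge (k:=true) w vS).
Qed.

Lemma partial_solution_split : u \in G -> a \in G -> partial_solution G u S.
Proof.
move=> uG aG.
have [sub0 c0S _ closed0 one0] := ps0; have [sub1 c1S _ closed1 one1] := ps1.
have partS k : part k \subset S.
  by apply/fintype.subsetP=> v vS; case: k vS => vS; rewrite !inE vS !orbT.
have uS : u \in S by rewrite !inE eqxx.
have aS : a \in S by rewrite !inE eqxx orbT.
have cua : connect (edge_in S) u a by apply: connect1; rewrite /edge_in /= uS aS.
split=> //.
- apply/fintype.subsetP=> v; rewrite !inE => /or4P[/eqP->|/eqP->|v0|v1] //.
    exact: (fintype.subsetP sub0).
  exact: (fintype.subsetP sub1).
- have ca k v : v \in part k -> connect (edge_in S) u v.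
    move=> vS; have cS : child k a \in part k by case: k vS.
    have cv := connect_edge_in_sub (partS k) (split_part_connect vS).
    apply: connect_trans cua (connect_trans _ cv); apply: connect1.
    by rewrite /edge_in /= aS (fintype.subsetP (partS k)) // (edge_child k aand eua).
  move=> v; rewrite !inE => /or4P[/eqP->|/eqP->|v0|v1] //.
    exact: ca false v v0.
  exact: ca true v v1.
- move=> a' w; rewrite !inE => /or4P[/eqP->|/eqP->|v0|v1] a'and wG e.
  + by rewrite (negbTE (or_not_and uor)) in a'and.
  + by case: (edge_andP aand e) => ->; rewrite ?c0S ?c1S !orbT.
  + by rewrite (closed0 a' w v0 a'and wG e) !orbT.
  + by rewrite (closed1 a' w v1 a'and wG e) !orbT.
- move=> o; rewrite !inE => /or4P[/eqP-> _|/eqP-> oor|v0 oor|v1 oor].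
  + apply/eqP/cards1P; exists a; apply/setP=> w.
    by rewrite [LHS]inE split_root_edge inE.
  + by move: aand; rewrite (negbTE (or_not_and oor)).
  + rewrite -(one0 o v0 oor); apply: eq_card => w.
    by rewrite [LHS]inE [RHS]inE (split_part_edge (k:=false)).
  + rewrite -(one1 o v1 oor); apply: eq_card => w.
    by rewrite [LHS]inE [RHS]inE (split_part_edge (k:=true)).
Qed.

End Split.

Lemma orval_gtNy (Gs : {set node}) W u :
  (forall v, -oo < W v) -> -oo < orval Gs W u.
Proof.
move=> W_gtNy; rewrite /orval lt_min cost_gtNy andbT.
apply: lt_bigmin => // a _; rewrite /aval; case: ifP => _;
  by rewrite !gtNy_adde ?cost_gtNy ?W_gtNy.
Qed.

Lemma le_orval (Gs : {set node}) W1 W2 u :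
  (forall v, W1 v <= W2 v) -> orval Gs W1 u <= orval Gs W2 u.
Proof.
move=> W12; apply: le_min2 (lexx _); apply: le_bigmin2 => a _; apply: leeD2l.
by rewrite /aval; case: ifP => _ //; apply: leeD.
Qed.

Lemma eq_orval (Gs : {set node}) W1 W2 u :
  (forall a k, a \in Gs -> is_and a -> edge u a -> W1 (child k a) = W2 (child k a)) ->
  orval Gs W1 u = orval Gs W2 u.
Proof.
move=> W12; rewrite /orval /min_and; congr (Order.min _ _).
apply: eq_bigr => a /andP[aG /andP[aand e]].
by rewrite /aval aand /child0 /child1 !(W12 a _ aG aand e).
Qed.

Lemma orval_graph_eq (G1 G2 : {set node}) W u :
  (forall a, is_and a -> edge u a -> (a \in G1) = (a \in G2)) ->
  orval G1 W u = orval G2 W u.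
Proof.
move=> G12; rewrite /orval /min_and; congr (Order.min _ _); apply: eq_bigl => a.
by case: (boolP (is_and a && edge u a)) => [/andP[aand e]|_]; rewrite ?andbF ?G12.
Qed.

Lemma min_and_attained (Gs : {set node}) W u : min_and Gs W u < +oo ->
  exists2 a, (a \in Gs) && (is_and a && edge u a) & min_and Gs W u = cost u a + aval W a.
Proof.
set P := [pred a | (a \in Gs) && (is_and a && edge u a)].
rewrite /min_and; case: (pickP P) => [a Pa _|none]; last by rewrite big_pred0 ?ltxx.
have [a' Pa' ->] := @eq_bigmin _ _ _ +oo a P (fun a => cost u a + aval W a) Pa (fun _ _ => leey _).
by exists a'.
Qed.

Record invariant (st : state) : Prop := {
  root_in_graph : Defs.root N F \in Gp st;
  expanded_in_graph v : v \in Ex st -> is_or v /\ v \in Gp st;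
  expanded_children_in_graph v w : v \in Ex st -> edge v w -> w \in Gp st;
  and_children_in_graph a w : a \in Gp st -> is_and a -> edge a w -> w \in Gp st;
  parent_expanded v w : is_or v -> edge v w -> w \in Gp st -> v \in Ex st;
  samples_neq0 v : v \in Gp st -> samples v != finset.set0;
  UB_unexpanded v : v \notin Ex st -> UB st v = +oo;
  UB_bellman v : v \in Ex st -> UB st v = orval (Gp st) (UB st) v;
  UB_gtNy v : -oo < UB st v }.

Section Bellman.
Variable st : state.
Hypothesis inv : invariant st.
Local Notation G := (Gp st).
Local Notation E := (Ex st).
Local Notation U := (UB st).

Lemma child_expanded u a k : is_and a -> cost u a + aval U a < +oo -> child k a \in E.
Proof.
have U_neqNy v : U v != -oo by rewrite -ltNye UB_gtNy.
move=> aand; apply: contraTT => /(UB_unexpanded inv) Uc.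
rewrite /aval aand -leNgt leye_eq /child0 /child1.
by case: k Uc => ->; rewrite ?addye ?addey // -ltNye cost_gtNy.
Qed.

Lemma partial_solution_expanded u S : is_or u -> partial_solution G u S -> u \in E.
Proof.
move=> uor ps; have [w [wS euw _]] := partial_solution_choice ps uor.
exact (parent_expanded inv uor euw (fintype.subsetP (partial_solution_sub ps) w wS)).
Qed.

Lemma getSolution_sound u S : getSolution st u S -> u \in E ->
  partial_solution G u S /\ sol_cost S = U u.
Proof.
elim=> {u S} [u uor le | u a S0 S1 uor aG aand eua Ua nle _ IH0 _ IH1] uE;
  have [_ uG] := expanded_in_graph inv uE.
  have u0 := samples_neq0 inv uG.
  have tG := expanded_children_in_graph inv uE (edge_term uor u0).
  split; first exact: partial_solution_leaf.
  by rewrite sol_cost_leaf // (UB_bellman inv uE) /orval min_r.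
have lt : min_and G U u < cost u (term u) by rewrite ltNge; apply/negP.
have fin : cost u a + aval U a < +oo by rewrite Ua (lt_le_trans lt (leey _)).
have [ps0 c0] := IH0 (child_expanded false aand fin).
have [ps1 c1] := IH1 (child_expanded true aand fin).
split; first exact: partial_solution_split.
rewrite (sol_cost_split uor aand eua ps0 ps1) c0 c1 (UB_bellman inv uE) /orval min_l ?ltW //.
by rewrite -Ua /aval aand.
Qed.

Lemma getSolution_exists u : u \in E -> exists S, getSolution st u S.
Proof.
have [n] := ubnP (F - depth u); elim: n u => // n IH u /ltnSE hn uE.
have [uor uG] := expanded_in_graph inv uE.
have [le|nle] := boolP (cost u (term u) <= min_and G U u).
  by exists [set u; term u]; apply: gs_leaf.
have lt : min_and G U u < cost u (term u) by rewrite ltNge.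
have [a /andP[aG /andP[aand eua]] Ua] := min_and_attained (lt_le_trans lt (leey _)).
have fin : cost u a + aval U a < +oo by rewrite -Ua (lt_le_trans lt (leey _)).
have child_solution k : exists Sk, getSolution st (child k a) Sk.
  apply: IH (child_expanded k aand fin).
  exact: leq_trans (height_child_lt k uor eua aand) hn.
have [S0 gs0] := child_solution false; have [S1 gs1] := child_solution true.
exists (u |: (a |: (S0 :|: S1))).
by apply: gs_node gs0 gs1 => //; apply/negP.
Qed.

Lemma UB_le_sol_cost u S : is_or u -> partial_solution G u S -> U u <= sol_cost S.
Proof.
have [n] := ubnP (F - depth u); elim: n u S => // n IH u S /ltnSE hn uor ps.
have [w [wS euw Sw]] := partial_solution_choice ps uor.
have wG : w \in G := fintype.subsetP (partial_solution_sub ps) w wS.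
have uE := parent_expanded inv uor euw wG.
rewrite (UB_bellman inv uE) /orval ge_min.
case: (edge_orP uor euw) => [wt|wand].
  have u0 := samples_neq0 inv (expanded_in_graph inv uE).2.
  subst w; by rewrite (partial_solution_leafE ps uor Sw) sol_cost_leaf ?lexx ?orbT.
have cS k : child k w \in S.
  have ewc := edge_child k wand euw.
  exact: partial_solution_and_child ps wS wand (and_children_in_graph inv wG wand ewc) ewc.
have psk k := partial_solution_reachset ps (cS k).
rewrite (partial_solution_splitE ps uor wand Sw).
rewrite (sol_cost_split uor wand euw (psk false) (psk true)).
have minw : min_and G U u <= cost u w + aval U w.
  by apply: bigmin_le_cond; rewrite wG wand euw.
apply/orP; left; apply: le_trans minw _.
rewrite /aval wand; apply/leeD2l/leeD; apply: IH _ _ _ (is_or_child _ wand) (psk _);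
  exact: leq_trans (height_child_lt _ uor euw wand) hn.
Qed.

End Bellman.

Section Propagation.
Variables (Gs E : {set node}).
Hypotheses (E_in : forall v, v \in E -> is_or v /\ v \in Gs)
  (E_parents : forall v w, is_or v -> edge v w -> w \in Gs -> v \in E).

Definition bellman_outside (Q : {set node}) (W : node -> \bar R) : Prop :=
  [/\ Q \subset E, forall v, v \notin E -> W v = +oo,
      forall v, v \in E -> orval Gs W v <= W v,
      forall v, v \in E -> v \notin Q -> W v = orval Gs W v
    & forall v, -oo < W v].

Lemma bellman_outside_skip (Q : {set node}) W u : ~~ (orval Gs W u < W u) ->
  bellman_outside Q W -> bellman_outside (Q :\ u) W.
Proof.
move=> nlt [QE Winf Wle Weq Wgt]; split=> //.
  by apply: fintype.subset_trans QE; apply/fintype.subsetP=> v /setD1P[].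
move=> v vE; rewrite !inE negb_and negbK => /orP[/eqP vu|vQ]; last exact: Weq.
by subst v; apply/eqP; rewrite eq_le (Wle u vE) andbT leNgt.
Qed.

Lemma bellman_outside_update (Q : {set node}) W u : u \in Q -> orval Gs W u < W u ->
  bellman_outside Q W ->
  bellman_outside ((Q :\ u) :|: parents Gs u) (upd W u (orval Gs W u)).
Proof.
move=> uQ lt [QE Winf Wle Weq Wgt].
have uE : u \in E by apply: (fintype.subsetP QE).
have [uor _] := E_in uE.
set W' := upd W u (orval Gs W u).
have W'le v : W' v <= W v.
  by rewrite /W' /upd; case: eqP => [->|_]; [exact: ltW | exact: lexx].
have W'u : orval Gs W' u = orval Gs W u.
  apply: eq_orval => a k _ aand e; rewrite /W' /upd.
  by rewrite (negbTE (child_neq_parent k uor e aand)).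
split.
- apply/fintype.subsetP=> v; rewrite !inE => /orP[/andP[_ vQ]|].
    exact: (fintype.subsetP QE).
  case/andP=> _ /andP[vor /existsP[a /andP[aG /and3P[_ e _]]]].
  exact: E_parents vor e aG.
- move=> v vE; rewrite /W' /upd; case: eqP => [vu|_]; last exact: Winf.
  by move: vE; rewrite vu uE.
- move=> v vE; apply: le_trans (le_orval _ _ W'le) _.
  by rewrite /W' /upd; case: eqP => [->|_]; [exact: lexx | exact: Wle].
- move=> v vE; rewrite !inE negb_or => /andP[vQ vpar].
  case: (eqVneq v u) => [->|vu]; first by rewrite W'u /W' /upd eqxx.
  rewrite /W' /upd (negbTE vu) -/W' (Weq v vE); last by move: vQ; rewrite vu.
  apply: eq_orval => a k aG aand e; rewrite /W' /upd; case: eqP => // cu.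
  have [vor vG] := E_in vE.
  case/negP: vpar; rewrite vG vor /=; apply/existsP; exists a.
  by rewrite aG aand e -cu (edge_child k aand e).
- by move=> v; rewrite /W' /upd; case: eqP => _ //; apply: orval_gtNy.
Qed.

Lemma propagate_bellman (Q : {set node}) W W' : propagate (fun v old => v < old) Gs Q W W' ->
  bellman_outside Q W -> bellman_outside finset.set0 W'.
Proof.
elim=> // {}Q {}W {}W' u uQ _ _ IH bW; apply: IH.
by case: ifP => lt; [apply: bellman_outside_update | apply: bellman_outside_skip; rewrite ?lt].
Qed.

End Propagation.

Section Expansion.
Variables (st : state) (o : node).
Hypotheses (inv : invariant st) (oG : o \in Gp st) (oor : is_or o) (onE : o \notin Ex st).
Local Notation Gs := (expand_Gp X st o).
Local Notation E' := (o |: Ex st).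

Lemma mem_expand_Gp w : (w \in Gs) =
  [|| w \in Gp st, w == term o, is_and_child X o w | is_grandchild X o w].
Proof. by rewrite !inE -!orbA. Qed.

Lemma graph_sub_expand w : w \in Gp st -> w \in Gs.
Proof. by move=> wG; rewrite mem_expand_Gp wG. Qed.

Lemma expand_expanded_in_graph v : v \in E' -> is_or v /\ v \in Gs.
Proof.
case/setU1P=> [->|vE]; first by rewrite graph_sub_expand.
by have [vor vG] := expanded_in_graph inv vE; rewrite graph_sub_expand.
Qed.

Lemma expand_expanded_children v w : v \in E' -> edge v w -> w \in Gs.
Proof.
case/setU1P=> [->|vE] e.
  rewrite mem_expand_Gp; case: (edge_orP oor e) => [->|wand]; first by rewrite eqxx orbT.
  by rewrite /is_and_child wand e !orbT.
by rewrite graph_sub_expand // (expanded_children_in_graph inv vE e).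
Qed.

Lemma expand_and_children a w : a \in Gs -> is_and a -> edge a w -> w \in Gs.
Proof.
rewrite mem_expand_Gp => /or4P[aG|/eqP->|ac|agc] aand e.
- by rewrite graph_sub_expand // (and_children_in_graph inv aG aand e).
- by rewrite (negbTE (term_not_and oor)) in aand.
- by rewrite mem_expand_Gp; apply/or4P; constructor 4; apply/existsP; exists a; rewrite ac e.
- by rewrite (negbTE (or_not_and (grandchild_or agc))) in aand.
Qed.

Lemma expand_parent_expanded v w : is_or v -> edge v w -> w \in Gs -> v \in E'.
Proof.
move=> vor e; rewrite mem_expand_Gp => /or4P[wG|/eqP wt|/andP[_ eow]|wgc].
- by rewrite inE (parent_expanded inv vor e wG) orbT.
- have eow : edge o w by rewrite wt; apply: edge_term oor (samples_neq0 inv oG).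
  by rewrite (or_parent_unique vor oor e eow) setU11.
- by rewrite (or_parent_unique vor oor e eow) setU11.
- case: (edge_orP vor e) => [wt|wand].
    by move: (grandchild_or wgc); rewrite wt; case: (v) vor.
  by rewrite (negbTE (or_not_and (grandchild_or wgc))) in wand.
Qed.

Lemma expand_samples_neq0 v : v \in Gs -> samples v != finset.set0.
Proof.
rewrite mem_expand_Gp => /or4P[vG|/eqP->|/andP[_ e]|/existsP[a /andP[_ e]]].
- exact (samples_neq0 inv vG).
- by case: (o) oor (samples_neq0 inv oG).
- exact: edge_samples_neq0 e.
- exact: edge_samples_neq0 e.
Qed.

Lemma expand_UB_bellman : bellman_outside Gs E' [set o] (UB st).
Proof.
have orval_expand v : v \in Ex st -> orval Gs (UB st) v = UB st v.
  move=> vE; rewrite (UB_bellman inv vE); apply: orval_graph_eq => a _ e.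
  by have aG := expanded_children_in_graph inv vE e; rewrite aG graph_sub_expand.
split.
- by apply/fintype.subsetP=> v; rewrite !inE => ->.
- by move=> v; rewrite inE negb_or => /andP[_ vE]; exact (UB_unexpanded inv vE).
- move=> v /setU1P[->|vE]; first by rewrite (UB_unexpanded inv onE) leey.
  by rewrite orval_expand.
- by move=> v /setU1P[->|vE]; rewrite ?inE ?eqxx // orval_expand.
- exact (UB_gtNy inv).
Qed.

Lemma invariant_expand LB' UB' :
  propagate (fun v old => v < old) Gs [set o] (UB st) UB' ->
  invariant (State Gs E' LB' UB').
Proof.
move=> prop.
have [_ UBinf _ UBeq UBgt] := propagate_bellman expand_expanded_in_graph
  expand_parent_expanded prop expand_UB_bellman.
split=> //=.
- exact: graph_sub_expand (root_in_graph inv).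
- exact: expand_expanded_in_graph.
- exact: expand_expanded_children.
- exact: expand_and_children.
- exact: expand_parent_expanded.
- exact: expand_samples_neq0.
- by move=> v vE; rewrite (UBeq v vE) // inE.
Qed.

End Expansion.

Lemma descend_unexpanded st x o : invariant st ->
  descend X Y rho1 rho0 alpha beta st x o -> x \in Gp st -> is_or x ->
  [/\ o \in Gp st, is_or o & o \notin Ex st].
Proof.
move=> inv; elim=> [x' x'E | x' a o' x'E aG aand e _ _ IH] //.
move=> _ _; have childG k : child k a \in Gp st.
  exact (and_children_in_graph inv aG aand (edge_child k aand e)).
by apply: IH; rewrite /Defs.next; case: ifP => _; rewrite ?childG ?is_or_child.
Qed.

Lemma invariant_init : (0 < N)%N -> invariant (init_state F Y rho1 rho0 alpha beta).
Proof.
move=> N0; split=> //=.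
- by rewrite inE.
- by move=> v; rewrite inE.
- by move=> v w; rewrite inE.
- by move=> a w; rewrite inE => /eqP->.
- by move=> v w vor e; rewrite inE => /eqP ew; subst w; case: v vor e.
- move=> v; rewrite inE => /eqP-> /=.
  by apply/set0Pn; exists (Ordinal N0); rewrite inE.
- by move=> v; rewrite inE.
Qed.

Lemma invariant_iteration st st' : invariant st ->
  iteration X Y rho1 rho0 alpha beta st st' -> invariant st'.
Proof.
move=> inv [_ [ o [LB' [UB' [desc _ prop ->]]]]].
have [oG oor onE] := descend_unexpanded inv desc (root_in_graph inv) erefl.
exact: invariant_expand prop.
Qed.

Lemma invariant_reachable st : (0 < N)%N ->
  reachable X Y rho1 rho0 alpha beta st -> invariant st.
Proof.
move=> N0; elim=> [|s s' _ inv]; first exact: invariant_init.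
exact: invariant_iteration.
Qed.

End MAPTreeCorrectness.

Unset Implicit Arguments.
Set Strict Implicit.
Set Printing Implicit Defensive.

Theorem lemma17 (R : realType) (N F : nat)
    (X : 'I_N -> 'I_F -> bool) (Y : 'I_N -> bool)
    (rho1 rho0 alpha beta : R) :
  (0 < N)%N -> (0 < rho1)%R -> (0 < rho0)%R ->
  (0 < alpha)%R -> (alpha < 1)%R -> (0 <= beta)%R ->
  forall st st' : state R N F,
    reachable X Y rho1 rho0 alpha beta st ->
    iteration X Y rho1 rho0 alpha beta st st' ->
    forall u : node N F, u \in Gp st' -> is_or u ->
    (exists S, partial_solution X (Gp st') u S) ->
      (exists S, getSolution X Y rho1 rho0 alpha beta st' u S) /\
      (forall S, getSolution X Y rho1 rho0 alpha beta st' u S ->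
         partial_solution X (Gp st') u S /\
         (forall S', partial_solution X (Gp st') u S' ->
            (sol_cost X Y rho1 rho0 alpha beta S
             <= sol_cost X Y rho1 rho0 alpha beta S')%E)).
Proof.
move=> N0 _ _ _ _ _ st st' reach it u _ uor [S0 ps0].
have inv := invariant_reachable N0 (reach_step reach it).
have uE := partial_solution_expanded inv uor ps0.
split; first exact (getSolution_exists inv uE).
move=> S gs; have [ps ->] := getSolution_sound inv gs uE.
by split=> // S' ps'; exact (UB_le_sol_cost inv uor ps').
Qed.
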